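(* Let $B\in\mathbb{R}^{n\times d}$ with $\|B\|=R\in(0,\infty)$, $g^*:\mathbb{R}^n\to\mathbb{R}\cup\{+\infty\}$ proper, lower semicontinuous and $\gamma$-strongly convex ($\gamma\ge0$), $\ell:\mathbb{R}^d\to\mathbb{R}\cup\{+\infty\}$ proper, lower semicontinuous and $\sigma$-strongly convex ($\sigma\ge0$). For the PDA$^2$ algorithm in the context, for all $(u,v)\in\mathcal{X}\times\mathcal{Y}$ and $k\ge1$, $$\psi_k(y_k)\le A_kg^*(v)+\frac12\|v-y_0\|^2-\frac{1+\gamma A_k}{2}\|v-y_k\|^2,\qquad \phi_k(x_k)\le A_k\ell(u)+\frac12\|u-x_0\|^2-\frac{1+\sigma A_k}{2}\|u-x_k\|^2.$$
   Context: Norms are Euclidean; $\sigma$-strong convexity of $f$ means $f((1-\alpha)x+\alpha\hat x)\le(1-\alpha)f(x)+\alpha f(\hat x)-\frac\sigma2\alpha(1-\alpha)\|\hat x-x\|^2$ for all $x,\hat x$, $\alpha\in(0,1)$. $\mathcal{X}=\mathrm{dom}(\ell)$, $\mathcal{Y}=\mathrm{dom}(g^* )$. PDA$^2$ algorithm: given $(x_0,y_0),(u,v)\in\mathcal{X}\times\mathcal{Y}$, set $a_0=A_0=0$, $x_{-1}=x_0$, $\phi_0(x)=\frac12\|x-x_0\|^2$, $\psi_0(y)=\frac12\|y-y_0\|^2$. For $k=1,2,\dots$: $a_k=\frac{\sqrt{(1+\sigma A_{k-1})(1+\gamma A_{k-1})}}{\sqrt2R}$, $A_k=A_{k-1}+a_k$;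 $\bar x_{k-1}=x_{k-1}+\frac{a_{k-1}}{a_k}(x_{k-1}-x_{k-2})$; $\psi_k(y)=\psi_{k-1}(y)+a_k(\langle-B\bar x_{k-1},y-v\rangle+g^*(y))$, $y_k=\arg\min_{y}\psi_k(y)$; $\phi_k(x)=\phi_{k-1}(x)+a_k(\langle x-u,B^Ty_k\rangle+\ell(x))$, $x_k=\arg\min_x\phi_k(x)$. *)

From HB Require Import structures.
From mathcomp Require Import all_boot all_order all_algebra.
From mathcomp Require Import all_classical all_reals all_analysis.
Set Implicit Arguments. Unset Strict Implicit. Unset Printing Implicit Defensive.
Import Order.TTheory GRing.Theory Num.Theory.
Import numFieldNormedType.Exports.
Local Open Scope classical_set_scope.
Local Open Scope ring_scope.

Definition inner (R : realType) (n : nat) (a b : 'cV[R]_n) : R :=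
  \sum_(i < n) a i 0 * b i 0.

Definition enorm (R : realType) (n : nat) (a : 'cV[R]_n) : R :=
  Num.sqrt (\sum_(i < n) a i 0 ^+ 2).

Definition opnorm (R : realType) (n d : nat) (B : 'M[R]_(n, d)) : R :=
  sup [set enorm (B *m x) | x in [set x : 'cV[R]_d | enorm x <= 1]].

Definition proper_fun (R : realType) (n : nat) (f : 'cV[R]_n -> \bar R) :=
  (forall x, f x != -oo%E) /\ (exists x, f x != +oo%E).

Definition dom (R : realType) (n : nat) (f : 'cV[R]_n -> \bar R) :=
  [set x | (f x < +oo)%E].

Definition strongly_convex (R : realType) (n : nat) (s : R)
    (f : 'cV[R]_n -> \bar R) :=
  forall (x xh : 'cV[R]_n) (al : R), 0 < al < 1 ->
    (f ((1 - al) *: x + al *: xh)%R <=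
     (1 - al)%:E * f x + al%:E * f xh
       - (s / 2 * al * (1 - al) * enorm (xh - x) ^+ 2)%:E)%E.

Fixpoint aA (R : realType) (sigma gamma Rn : R) (k : nat) : R * R :=
  match k with
  | 0 => (0, 0)
  | k'.+1 =>
      let A' := (aA sigma gamma Rn k').2 in
      let a := Num.sqrt ((1 + sigma * A') * (1 + gamma * A'))
               / (Num.sqrt 2 * Rn) in
      (a, A' + a)
  end.

Definition a_seq (R : realType) (sigma gamma Rn : R) (k : nat) : R :=
  (aA sigma gamma Rn k).1.
Definition A_seq (R : realType) (sigma gamma Rn : R) (k : nat) : R :=
  (aA sigma gamma Rn k).2.

(* Extrapolated point xbar_j = x_j + (a_j / a_{j+1}) (x_j - x_{j-1}),
   with x_{-1} = x_0 (realised by truncated subtraction j.-1). *)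
Definition xbar (R : realType) (d : nat) (sigma gamma Rn : R)
    (x : nat -> 'cV[R]_d) (j : nat) : 'cV[R]_d :=
  x j + (a_seq sigma gamma Rn j / a_seq sigma gamma Rn j.+1) *: (x j - x j.-1).

Definition psi (R : realType) (n d : nat) (sigma gamma Rn : R)
    (B : 'M[R]_(n, d)) (gs : 'cV[R]_n -> \bar R) (y0 v : 'cV[R]_n)
    (x : nat -> 'cV[R]_d) (k : nat) (y : 'cV[R]_n) : \bar R :=
  ((2^-1 * enorm (y - y0) ^+ 2)%:E +
   \sum_(1 <= i < k.+1)
     ((a_seq sigma gamma Rn i)%:E *
      ((inner (- (B *m xbar sigma gamma Rn x i.-1)) (y - v))%:E + gs y)))%E.

Definition phi (R : realType) (n d : nat) (sigma gamma Rn : R)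
    (B : 'M[R]_(n, d)) (l : 'cV[R]_d -> \bar R) (x0 u : 'cV[R]_d)
    (y : nat -> 'cV[R]_n) (k : nat) (z : 'cV[R]_d) : \bar R :=
  ((2^-1 * enorm (z - x0) ^+ 2)%:E +
   \sum_(1 <= i < k.+1)
     ((a_seq sigma gamma Rn i)%:E *
      ((inner (z - u) (B^T *m y i))%:E + l z)))%E.

(* If F is s-strongly convex and z minimizes F, comparing F z with F at
   (1 - al) z + al p and letting al go to 0 gives
   F z <= F p - s/2 |p - z|^2.  The objective psi_k (resp. phi_k) is
   1/2 |. - y_0|^2, plus coupling terms that are affine and vanish at v
   (resp. u), plus A_k g* (resp. A_k l); hence it is (1 + gamma A_k)-strongly
   (resp. (1 + sigma A_k)-strongly) convex and its value at v is
   A_k g*(v) + 1/2 |v - y_0|^2.  Of the step sizes only a_i >= 0 matters;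
   lower semicontinuity and |B| = R serve only the existence of the
   minimizers, which is assumed. *)

From HB Require Import structures.
From mathcomp Require Import all_boot all_order all_algebra.
From mathcomp Require Import all_classical all_reals all_analysis.
From mathcomp Require Import ring lra.
Import Order.TTheory GRing.Theory Num.Theory.
Import numFieldNormedType.Exports.
Local Open Scope classical_set_scope.
Local Open Scope ring_scope.

Lemma le0_of_forall_le_mul01 {R : realFieldType} (t c : R) : 0 <= c ->
  (forall al, 0 < al < 1 -> t <= al * c) -> t <= 0.
Proof.
move=> c_ge0 tc; apply/ler_addgt0Pr => e e_gt0; rewrite add0r.
have D_gt0 : 0 < e + e + c by lra.
apply: (le_trans (tc (e / (e + e + c)) _)).
  by rewrite divr_gt0 //= ltr_pdivrMr // mul1r; lra.
by rewrite mulrAC ler_pdivrMr // ler_wpM2l ?ltW //; lra.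
Qed.

Section StrongConvexity.
Context {R : realType} {m : nat}.
Implicit Types (f F : 'cV[R]_m -> \bar R) (x xh z p c : 'cV[R]_m).

Definition is_affine (h : 'cV[R]_m -> R) :=
  forall x xh al, h ((1 - al) *: x + al *: xh) = (1 - al) * h x + al * h xh.

Lemma sqr_enorm (w : 'cV[R]_m) : enorm w ^+ 2 = \sum_(i < m) w i 0 ^+ 2.
Proof. by rewrite sqr_sqrtr // sumr_ge0 // => i _; exact: sqr_ge0. Qed.

Lemma sqr_enorm_lerp c x xh al :
  enorm ((1 - al) *: x + al *: xh - c) ^+ 2 =
  (1 - al) * enorm (x - c) ^+ 2 + al * enorm (xh - c) ^+ 2
  - al * (1 - al) * enorm (xh - x) ^+ 2.
Proof.
rewrite !sqr_enorm !mulr_sumr -big_split -sumrB; apply: eq_bigr => i _.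
by rewrite !mxE /=; ring.
Qed.

Lemma strongly_convex_sqr_enorm_affine c {h : 'cV[R]_m -> R} : is_affine h ->
  strongly_convex 1 (fun w => (2^-1 * enorm (w - c) ^+ 2 + h w)%:E).
Proof.
move=> h_aff x xh al _; rewrite -!EFinM -!EFinD lee_fin.
by rewrite h_aff sqr_enorm_lerp; lra.
Qed.

Lemma strongly_convex_EFinD {t s : R} {g : 'cV[R]_m -> R} {f} :
  strongly_convex t (fun w => (g w)%:E) -> strongly_convex s f ->
  strongly_convex (t + s) (fun w => (g w)%:E + f w)%E.
Proof.
move=> g_cvx f_cvx x xh al al01.
have := g_cvx x xh al al01; rewrite -!EFinM -!EFinD lee_fin => g_le.
apply: le_trans (leeD (g_le : (_%:E <= _%:E)%E) (f_cvx x xh al al01)) _.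
rewrite !muleDr ?fin_num_adde_defr // -!EFinM !EFinB !EFinD.
rewrite le_eqVlt; apply/predU1l.
set D := enorm (xh - x) ^+ 2.
have -> : (t + s) / 2 * al * (1 - al) * D
          = t / 2 * al * (1 - al) * D + s / 2 * al * (1 - al) * D by ring.
by rewrite EFinD fin_num_oppeD // addeACA; congr (_ + _)%E; rewrite addeACA.
Qed.

Lemma ge0_mule_neq_ninfty (r : R) (y : \bar R) :
  0 <= r -> y != -oo%E -> (r%:E * y != -oo)%E.
Proof.
by move=> r_ge0 y_fin; rewrite mule_eq_ninfty (negbTE y_fin) !andbF lte_fin ltNge r_ge0.
Qed.

Lemma strongly_convex_scale {A s : R} {f} : 0 <= A -> (forall w, f w != -oo%E) ->
  strongly_convex s f -> strongly_convex (A * s) (fun w => A%:E * f w)%E.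
Proof.
move=> A_ge0 f_fin f_cvx x xh al al01.
have [al_gt0 al_lt1] := andP al01.
apply: le_trans (lee_wpmul2l _ (f_cvx x xh al al01)) _; first by rewrite lee_fin.
have sum_def : ((1 - al)%:E * f x +? al%:E * f xh)%E.
  apply: ltninfty_adde_def; rewrite inE ltNye ge0_mule_neq_ninfty //; lra.
rewrite muleDr ?fin_num_adde_defl // muleDr // muleN -EFinM !(muleCA A%:E).
by rewrite !mulrA.
Qed.

Lemma strongly_convex_min_le {s : R} {F z p} : 0 <= s -> strongly_convex s F ->
  (forall w, (F z <= F w)%E) -> (F p < +oo)%E ->
  (F z <= F p - (s / 2 * enorm (p - z) ^+ 2)%:E)%E.
Proof.
move=> s_ge0 F_cvx z_min Fp_lt.
have Fz_le := z_min p.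
case Fz: (F z) Fz_le => [rz| |] Fz_le; last 2 first.
- by move: Fz_le; rewrite leye_eq => /eqP Fp; rewrite Fp in Fp_lt.
- exact: leNye.
case Fp: (F p) Fp_lt Fz_le => [rp| |] // _ _.
rewrite -EFinB lee_fin -subr_le0.
apply: (@le0_of_forall_le_mul01 _ _ (s / 2 * enorm (p - z) ^+ 2)).
  by rewrite mulr_ge0 ?sqr_ge0 ?divr_ge0.
move=> al al01; have [al_gt0 al_lt1] := andP al01.
have := le_trans (z_min _) (F_cvx z p al al01).
rewrite Fz Fp -!EFinM -!EFinD lee_fin => le_seg.
rewrite -(ler_pM2l al_gt0); nra.
Qed.

End StrongConvexity.

Section Inner.
Context {R : realType} {m : nat}.
Implicit Types (b c v w : 'cV[R]_m).

Lemma innerC b c : inner b c = inner c b.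
Proof. by apply: eq_bigr => i _; rewrite mulrC. Qed.

Lemma inner0r c : inner c 0 = 0.
Proof. by rewrite /inner big1 // => i _; rewrite mxE mulr0. Qed.

Lemma inner0l c : inner 0 c = 0.
Proof. by rewrite innerC inner0r. Qed.

Lemma is_affine_inner_subr c v : is_affine (fun w => inner c (w - v)).
Proof.
move=> x xh al; rewrite /inner !mulr_sumr -big_split; apply: eq_bigr => i _.
by rewrite !mxE /=; ring.
Qed.

Lemma is_affine_inner_subl c v : is_affine (fun w => inner (w - v) c).
Proof. by move=> x xh al; rewrite !(innerC _ c); exact: is_affine_inner_subr. Qed.

Lemma is_affine_sum {I : Type} {r : seq I} {P : pred I} {a : I -> R}
    {h : I -> 'cV[R]_m -> R} :
  (forall i, is_affine (h i)) ->
  is_affine (fun w => \sum_(i <- r | P i) a i * h i w).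
Proof.
move=> h_aff x xh al; rewrite !mulr_sumr -big_split; apply: eq_bigr => i _.
by rewrite h_aff /=; ring.
Qed.

End Inner.

Section ProxObjective.
Context {R : realType} {m : nat}.
Variables (K : nat) (c0 : 'cV[R]_m) (a : nat -> R)
  (h : nat -> 'cV[R]_m -> R) (f : 'cV[R]_m -> \bar R).
Hypothesis a_ge0 : forall i, 0 <= a i.
Local Notation A := (\sum_(1 <= i < K.+1) a i).

(* [psi] and [phi] unfold to this objective, with [a := a_seq] and the
   coupling terms as [h]. *)
Definition prox_objective (w : 'cV[R]_m) : \bar R :=
  ((2^-1 * enorm (w - c0) ^+ 2)%:E
   + \sum_(1 <= i < K.+1) ((a i)%:E * ((h i w)%:E + f w)))%E.

Lemma prox_objectiveE w : prox_objective w =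
  ((2^-1 * enorm (w - c0) ^+ 2 + \sum_(1 <= i < K.+1) a i * h i w)%:E
   + A%:E * f w)%E.
Proof.
rewrite /prox_objective EFinD -addeA; congr (_ + _)%E.
under eq_bigr => i _ do rewrite muleDr // -EFinM.
rewrite big_split /= sumEFin -[A%:E]sumEFin ge0_sume_distrl // => i _.
by rewrite lee_fin.
Qed.

Lemma prox_objective_min_le (s : R) z p :
  0 <= s -> (forall w, f w != -oo%E) -> strongly_convex s f ->
  (forall i, is_affine (h i)) -> (forall i, h i p = 0) -> (f p < +oo)%E ->
  (forall w, (prox_objective z <= prox_objective w)%E) ->
  (prox_objective z <= A%:E * f p
     + (2^-1 * enorm (p - c0) ^+ 2 - (1 + s * A) / 2 * enorm (p - z) ^+ 2)%:E)%E.
Proof.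
move=> s_ge0 f_fin f_cvx h_aff hp0 fp_lt z_min.
have A_ge0 : 0 <= A by rewrite sumr_ge0.
have obj_cvx : strongly_convex (1 + A * s) prox_objective.
  have sum_aff : is_affine (fun w => \sum_(1 <= i < K.+1) a i * h i w).
    exact: is_affine_sum.
  move=> x xh al al01; rewrite !prox_objectiveE.
  exact: (strongly_convex_EFinD (strongly_convex_sqr_enorm_affine c0 sum_aff)
           (strongly_convex_scale A_ge0 f_fin f_cvx) x xh al al01).
have fp_num : f p \is a fin_num by rewrite fin_numE f_fin -ltey.
have obj_p : prox_objective p = (2^-1 * enorm (p - c0) ^+ 2 + A * fine (f p))%:E.
  by rewrite prox_objectiveE big1 ?addr0 => [|i _]; rewrite ?hp0 ?mulr0 // -(fineK fp_num).
have obj_p_lt : (prox_objective p < +oo)%E by rewrite obj_p ltry.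
apply: le_trans (strongly_convex_min_le _ obj_cvx z_min obj_p_lt) _.
  by rewrite addr_ge0 ?mulr_ge0.
by rewrite obj_p -(fineK fp_num) -EFinM -!EFinD lee_fin; lra.
Qed.

End ProxObjective.

Lemma A_seq_sum {R : realType} (s g Rn : R) k :
  A_seq s g Rn k = \sum_(1 <= i < k.+1) a_seq s g Rn i.
Proof.
elim: k => [|k IHk]; first by rewrite big_geq.
by rewrite big_nat_recr //= -IHk.
Qed.

Lemma a_seq_ge0 {R : realType} (s g Rn : R) i : 0 <= Rn -> 0 <= a_seq s g Rn i.
Proof.
by case: i => [|i] Rn_ge0 //; rewrite /a_seq /= divr_ge0 ?mulr_ge0 ?sqrtr_ge0.
Qed.

Theorem lemma1 (R : realType) (n d : nat) (B : 'M[R]_(n, d)) (Rn : R)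
    (gs : 'cV[R]_n -> \bar R) (l : 'cV[R]_d -> \bar R) (gamma sigma : R)
    (x : nat -> 'cV[R]_d) (y : nat -> 'cV[R]_n)
    (u : 'cV[R]_d) (v : 'cV[R]_n) :
  0 < Rn -> opnorm B = Rn ->
  proper_fun gs -> lower_semicontinuous gs -> 0 <= gamma ->
  strongly_convex gamma gs ->
  proper_fun l -> lower_semicontinuous l -> 0 <= sigma ->
  strongly_convex sigma l ->
  dom l (x 0%N) -> dom gs (y 0%N) -> dom l u -> dom gs v ->
  (* y_k = argmin psi_k and x_k = argmin phi_k for every k >= 1 *)
  (forall k, (1 <= k)%N -> forall z,
      (psi sigma gamma Rn B gs (y 0%N) v x k (y k)
       <= psi sigma gamma Rn B gs (y 0%N) v x k z)%E) ->
  (forall k, (1 <= k)%N -> forall z,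
      (phi sigma gamma Rn B l (x 0%N) u y k (x k)
       <= phi sigma gamma Rn B l (x 0%N) u y k z)%E) ->
  forall k, (1 <= k)%N ->
    (psi sigma gamma Rn B gs (y 0%N) v x k (y k)
     <= (A_seq sigma gamma Rn k)%:E * gs v
        + (2^-1 * enorm (v - y 0%N) ^+ 2
           - (1 + gamma * A_seq sigma gamma Rn k) / 2 * enorm (v - y k) ^+ 2)%:E)%E
    /\
    (phi sigma gamma Rn B l (x 0%N) u y k (x k)
     <= (A_seq sigma gamma Rn k)%:E * l u
        + (2^-1 * enorm (u - x 0%N) ^+ 2
           - (1 + sigma * A_seq sigma gamma Rn k) / 2 * enorm (u - x k) ^+ 2)%:E)%E.
Proof.
move=> Rn_gt0 _ [gs_fin _] _ gamma_ge0 gs_cvx [l_fin _] _ sigma_ge0 l_cvx _ _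
  u_dom v_dom y_min x_min k k_ge1.
have a_ge0 i := a_seq_ge0 sigma gamma Rn i (ltW Rn_gt0).
rewrite A_seq_sum; split.
- apply: (prox_objective_min_le k (y 0%N) _
    (fun i w => inner (- (B *m xbar sigma gamma Rn x i.-1)) (w - v)) gs a_ge0)
    => // [i|i|].
  + exact: is_affine_inner_subr.
  + by rewrite subrr inner0r.
  + exact: y_min.
- apply: (prox_objective_min_le k (x 0%N) _
    (fun i w => inner (w - u) (B^T *m y i)) l a_ge0) => // [i|i|].
  + exact: is_affine_inner_subl.
  + by rewrite subrr inner0l.
  + exact: x_min.
Qed.
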